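(* Let $(W,S)$ be a Coxeter system with $S$ finite, and let $\mathcal{R}_W\subseteq S$ be a complete set of representatives of the $W$-conjugacy classes of elements of $Q_W$, with $c(W)$ the number of these classes. Then the abelianization $\operatorname{Ad}(Q_W)_{\mathrm{Ab}}$ is the free abelian group with basis $\{[e_s]\mid s\in\mathcal{R}_W\}$. In particular $\operatorname{Ad}(Q_W)_{\mathrm{Ab}}\cong\mathbb{Z}^{c(W)}$.
   Context: A Coxeter system $(W,S)$: $S$ finite, $m:S\times S\to\mathbb{N}\cup\{\infty\}$ with $m(s,s)=1$, $2\le m(s,t)=m(t,s)\le\infty$ for $s\ne t$, $W=\langle s\in S\mid (st)^{m(s,t)}=1\ (m(s,t)<\infty)\rangle$. The Coxeter quandle is $Q_W=\bigcup_{w\in W}w^{-1}Sw$ with $x\ast y=yxy$, and $\operatorname{Ad}(Q_W)=\langle e_x\ (x\in Q_W)\mid e_y^{-1}e_xe_y=e_{x\ast y}\rangle$. For a group $G$, $G_{\mathrm{Ab}}=G/[G,G]$ and $[g]$ denotes the image of $g$ in $G_{\mathrm{Ab}}$. *)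

(* Group presentations are encoded by words in the free
   group together with the word-problem congruence. *)
From mathcomp Require Import all_boot all_order all_algebra.
Set Implicit Arguments. Unset Strict Implicit. Unset Printing Implicit Defensive.

(* a letter (x, b): x if b = false, x^-1 if b = true *)
Definition letter (X : Type) := (X * bool)%type.
Definition word (X : Type) := seq (letter X).
Definition inv_letter (X : Type) (a : letter X) : letter X := (a.1, ~~ a.2).
Definition inv_word (X : Type) (w : word X) : word X := rev (map (@inv_letter X) w).

(** * The group <X | Rel> : u and v represent the same element iff
    pres_eq Rel u v (the congruence generated by free reduction and the
    relators, i.e. u v^-1 lies in the normal closure of Rel). *)
Inductive pres_eq (X : Type) (Rel : word X -> Prop) : word X -> word X -> Prop :=
| pe_refl w : pres_eq Rel w w
| pe_sym u v : pres_eq Rel u v -> pres_eq Rel v u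
| pe_trans u v w : pres_eq Rel u v -> pres_eq Rel v w -> pres_eq Rel u w
| pe_free u v (a : letter X) : pres_eq Rel (u ++ a :: inv_letter a :: v) (u ++ v)
| pe_rel u v r : Rel r -> pres_eq Rel (u ++ r ++ v) (u ++ v).
Arguments pres_eq {X} Rel _ _.

(** * Coxeter matrices: m s t = 0 encodes m(s,t) = infinity *)
Definition coxeter_matrix (S : finType) (m : S -> S -> nat) : Prop :=
  (forall s, m s s = 1%N) /\ (forall s t, m s t = m t s) /\
  (forall s t, s != t -> m s t != 1%N).
Arguments coxeter_matrix {S} m.

Definition coxeter_rel (S : finType) (m : S -> S -> nat) (r : word S) : Prop :=
  exists s t, m s t <> 0%N /\ r = flatten (nseq (m s t) [:: (s, false); (t, false)]).
Arguments coxeter_rel {S} m r.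

Definition W_eq (S : finType) (m : S -> S -> nat) := pres_eq (coxeter_rel m).
Arguments W_eq {S} m.

Definition W_conj (S : finType) (m : S -> S -> nat) (x y : word S) : Prop :=
  exists w : word S, W_eq m y (inv_word w ++ x ++ w).
Arguments W_conj {S} m x y.

Definition inQ (S : finType) (m : S -> S -> nat) (u : word S) : Prop :=
  exists (w : word S) (s : S), W_eq m u (inv_word w ++ [:: (s, false)] ++ w).
Arguments inQ {S} m u.

(* the elements of Q_W (via representatives; representatives of the same
   element of W are identified in Ad(Q_W) by the relators below) *)
Definition QW (S : finType) (m : S -> S -> nat) := {u : word S | inQ m u}.
Arguments QW {S} m.

(* relators of Ad(Q_W) = < e_x (x in Q_W) | e_y^-1 e_x e_y = e_{x*y} >,
   with x * y = y x y; plus e_x = e_x' when x, x' represent the same element *)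
Definition ad_rel (S : finType) (m : S -> S -> nat) (r : word (QW m)) : Prop :=
  (exists x x' : QW m, W_eq m (proj1_sig x) (proj1_sig x') /\ r = [:: (x, false); (x', true)])
  \/
  (exists x y z : QW m, W_eq m (proj1_sig z) (proj1_sig y ++ proj1_sig x ++ proj1_sig y) /\
       r = [:: (y, true); (x, false); (y, false); (z, true)]).
Arguments ad_rel {S} m r.

Definition adab_rel (S : finType) (m : S -> S -> nat) (r : word (QW m)) : Prop :=
  ad_rel m r \/
  exists a b : word (QW m), r = inv_word a ++ inv_word b ++ a ++ b.
Arguments adab_rel {S} m r.

Definition adab_eq (S : finType) (m : S -> S -> nat) := pres_eq (adab_rel m).
Arguments adab_eq {S} m.

Lemma inQ_gen (S : finType) (m : S -> S -> nat) (s : S) : inQ m [:: (s, false)].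
Proof. by exists [::], s; apply: pe_refl. Qed.
Arguments inQ_gen {S} m s.

Definition gen_of (S : finType) (m : S -> S -> nat) (s : S) : QW m :=
  exist _ [:: (s, false)] (inQ_gen m s).
Arguments gen_of {S} m s.

Definition complete_reps (S : finType) (m : S -> S -> nat) (R : {set S}) : Prop :=
  (forall x : word S, inQ m x -> exists2 s, s \in R & W_conj m x [:: (s, false)]) /\
  (forall s t, s \in R -> t \in R -> W_conj m [:: (s, false)] [:: (t, false)] -> s = t).
Arguments complete_reps {S} m R.

(* the word  prod_{s in R} e_s^{f s}  (integer combination of the [e_s]) *)
Definition comb (S : finType) (m : S -> S -> nat) (R : {set S}) (f : S -> int)
  : word (QW m) :=
  flatten [seq nseq `|f s|%N (gen_of m s, (f s < 0)%R) | s <- enum R].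

Arguments comb {S} m R f.

(* Every element x of Q_W is W-conjugate to some s in R.  Conjugating x by a
   generator t is mirrored in Ad(Q_W) by conjugating e_x by e_t, which becomes
   trivial after abelianization, so [e_x] = [e_s] and the [e_s] with s in R
   span.  For independence, count the letters e_x^{+-1} of a word according to
   the W-conjugacy class of x: every relator has zero count in each class (the
   element yxy is conjugate to x because y is an involution), and the word
   prod_s e_s^{f s} has count f s in the class of s. *)
From mathcomp Require Import all_boot all_order all_algebra zify.
From Stdlib Require Import ClassicalEpsilon.
Set Implicit Arguments. Unset Strict Implicit. Unset Printing Implicit Defensive.
Import GRing.Theory.
Local Open Scope ring_scope.

Section Words.
Variable X : Type.

Lemma inv_letterK : involutive (@inv_letter X).
Proof. by case=> x b; rewrite /inv_letter /= negbK. Qed.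

Lemma inv_word_cat (u v : word X) : inv_word (u ++ v) = inv_word v ++ inv_word u.
Proof. by rewrite /inv_word map_cat rev_cat. Qed.

Lemma inv_word_cons (a : letter X) u :
  inv_word (a :: u) = inv_word u ++ [:: inv_letter a].
Proof. by rewrite -cat1s inv_word_cat. Qed.

Lemma inv_wordK : involutive (@inv_word X).
Proof.
by move=> u; rewrite /inv_word map_rev revK -map_comp (eq_map inv_letterK) map_id.
Qed.

End Words.

Section Presentation.
Variables (X : Type) (Rel : word X -> Prop).

Lemma pres_eq_catl (a u v : word X) :
  pres_eq Rel u v -> pres_eq Rel (a ++ u) (a ++ v).
Proof.
elim=> [w|u' v' _|u' v' w' _ IH1 _ IH2|u' v' b|u' v' r Hr].
- exact: pe_refl.
- exact: pe_sym.
- exact: pe_trans IH1 IH2.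
- by move: (pe_free Rel (a ++ u') v' b); rewrite !catA.
- by move: (pe_rel (a ++ u') v' Hr); rewrite !catA.
Qed.

Lemma pres_eq_catr (b u v : word X) :
  pres_eq Rel u v -> pres_eq Rel (u ++ b) (v ++ b).
Proof.
elim=> [w|u' v' _|u' v' w' _ IH1 _ IH2|u' v' c|u' v' r Hr].
- exact: pe_refl.
- exact: pe_sym.
- exact: pe_trans IH1 IH2.
- by move: (pe_free Rel u' (v' ++ b) c); rewrite -!catA.
- by move: (pe_rel u' (v' ++ b) Hr); rewrite -!catA.
Qed.

Lemma pres_eq_cat (u u' v v' : word X) :
  pres_eq Rel u u' -> pres_eq Rel v v' -> pres_eq Rel (u ++ v) (u' ++ v').
Proof. by move=> Hu Hv; apply: pe_trans (pres_eq_catr _ Hu) (pres_eq_catl _ Hv). Qed.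

Lemma pres_eq_mulV (w : word X) : pres_eq Rel (w ++ inv_word w) [::].
Proof.
elim: w => [|a w IH]; first exact: pe_refl.
rewrite inv_word_cons /= catA.
apply: pe_trans (pres_eq_catr _ (pres_eq_catl [:: a] IH)) _.
exact: (pe_free Rel [::] [::] a).
Qed.

Lemma pres_eq_Vmul (w : word X) : pres_eq Rel (inv_word w ++ w) [::].
Proof. by have := pres_eq_mulV (inv_word w); rewrite inv_wordK. Qed.

Lemma pres_eq_mulKV (u v : word X) : pres_eq Rel (u ++ inv_word u ++ v) v.
Proof. by rewrite catA; apply: pres_eq_catr (pres_eq_mulV u). Qed.

Lemma pres_eq_mulVK (u v : word X) : pres_eq Rel (inv_word u ++ u ++ v) v.
Proof. by rewrite catA; apply: pres_eq_catr (pres_eq_Vmul u). Qed.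

Lemma pres_eq_inv (u v : word X) :
  pres_eq Rel u v -> pres_eq Rel (inv_word u) (inv_word v).
Proof.
move=> Huv; have := pres_eq_catl (inv_word u) (pres_eq_mulV v).
rewrite cats0 catA => /pe_sym/pe_trans; apply.
apply: pe_trans (pres_eq_catr _ (pres_eq_catl _ (pe_sym Huv))) _.
by rewrite -catA; apply: (pres_eq_mulVK u (inv_word v)).
Qed.

Lemma pres_eq_conjV (x y w : word X) :
  pres_eq Rel y (inv_word w ++ x ++ w) -> pres_eq Rel x (w ++ y ++ inv_word w).
Proof.
move=> H; apply: pe_sym.
apply: pe_trans (pres_eq_catl w (pres_eq_catr (inv_word w) H)) _.
rewrite -!catA; apply: pe_trans (pres_eq_mulKV _ _) _.
by have := pres_eq_catl x (pres_eq_mulV w); rewrite cats0.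
Qed.

End Presentation.

Definition sign_of (b : bool) : int := if b then -1 else 1.

Definition pow_word (X : Type) (g : X) (z : int) : word X := nseq `|z|%N (g, z < 0).

Lemma pres_eq_pow_cons (X : Type) (Rel : word X -> Prop) (g : X) (b : bool) (z : int) :
  pres_eq Rel ((g, b) :: pow_word g z) (pow_word g (sign_of b + z)).
Proof.
rewrite /pow_word /sign_of; case: b; case: z => n.
- case: n => [|n]; first exact: pe_refl.
  have -> : absz (-1 + n.+1%:Z) = n by lia.
  have -> : (-1 + n.+1%:Z < 0) = false by lia.
  exact: (pe_free Rel [::] _ (g, true)).
- have -> : absz (-1 + Negz n) = n.+2 by lia.
  have -> : (-1 + Negz n < 0) = true by lia.
  have -> : (Negz n < 0) = true by lia.
  exact: pe_refl.
- have -> : absz (1 + n%:Z) = n.+1 by lia.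
  have -> : (1 + n%:Z < 0) = false by lia.
  have -> : (n%:Z < 0) = false by lia.
  exact: pe_refl.
- have -> : absz (1 + Negz n) = n by lia.
  have -> : (1 + Negz n < 0) = (0 < n)%N by lia.
  have -> : (Negz n < 0) = true by lia.
  by case: n => [|n]; apply: (pe_free Rel [::] _ (g, false)).
Qed.

Section ExponentSum.
Variables (X : Type) (T : eqType) (cls : X -> T).

Definition exponent_sum (u : word X) (t : T) : int :=
  \sum_(a <- u | cls a.1 == t) sign_of a.2.

Lemma exponent_sum_nil t : exponent_sum [::] t = 0.
Proof. exact: big_nil. Qed.

Lemma exponent_sum_cat u v t :
  exponent_sum (u ++ v) t = exponent_sum u t + exponent_sum v t.
Proof. exact: big_cat. Qed.

Lemma exponent_sum_cons a u t :
  exponent_sum (a :: u) t = (if cls a.1 == t then sign_of a.2 else 0) + exponent_sum u t.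
Proof. by rewrite /exponent_sum big_cons; case: ifP; rewrite ?add0r. Qed.

Lemma exponent_sum_free u v a t :
  exponent_sum (u ++ a :: inv_letter a :: v) t = exponent_sum (u ++ v) t.
Proof.
rewrite !exponent_sum_cat !exponent_sum_cons.
by case: a => x [] /=; case: (cls x == t); rewrite /sign_of; lia.
Qed.

Lemma exponent_sum_inv u t : exponent_sum (inv_word u) t = - exponent_sum u t.
Proof.
elim: u => [|a u IH]; first by rewrite exponent_sum_nil oppr0.
rewrite inv_word_cons exponent_sum_cat IH !exponent_sum_cons exponent_sum_nil.
by case: a => x [] /=; case: (cls x == t); rewrite /sign_of; lia.
Qed.

Lemma exponent_sum_pow g z t :
  exponent_sum (pow_word g z) t = if cls g == t then z else 0.
Proof.
rewrite /exponent_sum /pow_word big_nseq_cond; case: (cls g == t) => //=.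
by rewrite iter_addr_0; case: z => n; rewrite /sign_of /= ?mulNrn ?NegzE natz.
Qed.

Lemma exponent_sum_flatten (us : seq (word X)) t :
  exponent_sum (flatten us) t = \sum_(u <- us) exponent_sum u t.
Proof.
elim: us => [|u us IH]; first by rewrite big_nil exponent_sum_nil.
by rewrite /= exponent_sum_cat IH big_cons.
Qed.

Lemma exponent_sum_pres_eq (Rel : word X -> Prop) u v t :
  (forall r, Rel r -> exponent_sum r t = 0) ->
  pres_eq Rel u v -> exponent_sum u t = exponent_sum v t.
Proof.
move=> Rel0; elim=> {u v} [//|u v _ -> //|u v w _ -> _ -> //|u v a|u v r Hr].
  exact: exponent_sum_free.
by rewrite !exponent_sum_cat (Rel0 r Hr) add0r.
Qed.

End ExponentSum.

Section Coxeter.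
Variables (S : finType) (m : S -> S -> nat).

Lemma W_eq_conj (x y : word S) : W_eq m x y -> W_conj m x y.
Proof. by move=> Hxy; exists [::]; rewrite cats0; apply: pe_sym. Qed.

Lemma W_conj_sym (x y : word S) : W_conj m x y -> W_conj m y x.
Proof. by case=> w /pres_eq_conjV Hx; exists (inv_word w); rewrite inv_wordK. Qed.

Lemma W_conj_trans (x y z : word S) : W_conj m x y -> W_conj m y z -> W_conj m x z.
Proof.
case=> [v Hy] [w Hz]; exists (v ++ w); apply: pe_trans Hz _.
rewrite inv_word_cat -!catA; apply: pres_eq_catl.
by rewrite !catA; apply: pres_eq_catr; rewrite -!catA.
Qed.

Hypothesis m_diag : forall s, m s s = 1%N.

Lemma W_eq_letter s b : W_eq m [:: (s, b)] [:: (s, false)].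
Proof.
have ss : coxeter_rel m [:: (s, false); (s, false)] by exists s, s; rewrite m_diag.
case: b; last exact: pe_refl.
apply: pe_trans (pe_sym (pe_rel [:: (s, true)] [::] ss)) _.
exact: (pe_free _ [::] [:: (s, false)] (s, true)).
Qed.

Lemma inQ_W_eq_inv (y : word S) : inQ m y -> W_eq m y (inv_word y).
Proof.
case=> w [s Hy]; apply: pe_trans Hy (pe_trans _ (pres_eq_inv (pe_sym Hy))).
rewrite !inv_word_cat inv_wordK -catA; apply: pres_eq_catl; apply: pres_eq_catr.
exact: pe_sym (W_eq_letter s true).
Qed.

End Coxeter.

Section AdjointGroup.
Variables (S : finType) (m : S -> S -> nat).

Lemma adab_eq_comm (a b : word (QW m)) : adab_eq m (a ++ b) (b ++ a).
Proof.
have Hr : adab_rel m (inv_word a ++ inv_word b ++ a ++ b) by right; exists a, b.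
have := pe_rel (b ++ a) [::] Hr; rewrite !cats0 -catA => H; apply: pe_trans _ H.
apply: pe_sym; apply: pe_trans (pres_eq_catl b (pres_eq_mulKV _ a _)) _.
exact: pres_eq_mulKV.
Qed.

Lemma adab_eq_conj_gen (x z : QW m) s :
  W_eq m (sval z) ([:: (s, false)] ++ sval x ++ [:: (s, false)]) ->
  adab_eq m [:: (x, false)] [:: (z, false)].
Proof.
(* e_x = e_y (e_y^-1 e_x e_y e_z^-1) e_z e_y^-1, the bracket is a relator, and
   e_y e_z e_y^-1 = e_z after commuting. *)
move=> Hz; set y := gen_of m s.
have Hr : adab_rel m [:: (y, true); (x, false); (y, false); (z, true)]
  by left; right; exists x, y, z.
apply: (@pe_trans _ _ _ [:: (y, false); (y, true); (x, false); (y, false); (z, true);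
                            (z, false); (y, true)]).
  apply: pe_sym.
  apply: pe_trans (pe_free _ [::] [:: (x, false); (y, false); (z, true); (z, false); (y, true)]
                    (y, false)) _.
  apply: pe_trans (pe_free _ [:: (x, false); (y, false)] [:: (y, true)] (z, true)) _.
  exact: (pe_free _ [:: (x, false)] [::] (y, false)).
apply: pe_trans (pe_rel [:: (y, false)] [:: (z, false); (y, true)] Hr) _.
apply: pe_trans (adab_eq_comm [:: (y, false)] [:: (z, false); (y, true)]) _.
exact: (pe_free _ [:: (z, false)] [::] (y, true)).
Qed.

Hypothesis m_diag : forall s, m s s = 1%N.

Lemma adab_eq_conj (x y : QW m) b :
  W_conj m (sval x) (sval y) -> adab_eq m [:: (x, b)] [:: (y, b)].
Proof.
suff conj_pos : W_conj m (sval x) (sval y) -> adab_eq m [:: (x, false)] [:: (y, false)].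
  by case: b => // /conj_pos /pres_eq_inv.
case=> v; elim: v x => [|[s c] v IH] x Hy.
  have Hr : adab_rel m [:: (x, false); (y, true)].
    by left; left; exists x, y; split; [apply: pe_sym; rewrite cats0 in Hy|].
  apply: pe_trans (pe_sym (pe_free _ [:: (x, false)] [::] (y, true))) _.
  exact: (pe_rel [::] [:: (y, false)] Hr).
have inQ_x1 : inQ m (inv_letter (s, c) :: sval x ++ [:: (s, c)]).
  case: (svalP x) => w [t Hw]; exists (w ++ [:: (s, c)]), t.
  have := pres_eq_catl [:: inv_letter (s, c)] (pres_eq_catr [:: (s, c)] Hw).
  by rewrite inv_word_cat /= -!catA.
pose x1 : QW m := exist _ _ inQ_x1.
apply: (@pe_trans _ _ _ [:: (x1, false)]); last first.
  by apply: IH; rewrite /= -catA; move: Hy; rewrite inv_word_cons -!catA.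
apply: (adab_eq_conj_gen (s := s)).
exact: pres_eq_cat (W_eq_letter m_diag s (~~ c))
                   (pres_eq_catl (sval x) (W_eq_letter m_diag s c)).
Qed.

End AdjointGroup.

Section Spanning.
Variables (S : finType) (m : S -> S -> nat) (R : {set S}).

Lemma comb0 : comb m R (fun=> 0) = [::].
Proof. by rewrite /comb; elim: (enum R). Qed.

Lemma adab_eq_comb_cons f r b : r \in R ->
  adab_eq m ((gen_of m r, b) :: comb m R f)
    (comb m R (fun s => if s == r then sign_of b + f r else f s)).
Proof.
pose f' s := if s == r then sign_of b + f r else f s.
have f'E l : r \notin l ->
    [seq pow_word (gen_of m s) (f' s) | s <- l] = [seq pow_word (gen_of m s) (f s) | s <- l].
  by move=> rNl; apply/eq_in_map => s sl; rewrite /f'; case: eqP sl rNl => // -> ->.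
rewrite -mem_enum /comb; have := enum_uniq (mem R).
move: (enum R) => e + r_e; case/splitPr: r_e => p q.
rewrite cat_uniq /= negb_or => /and3P[_ /andP[rNp _] /andP[rNq _]].
rewrite !map_cat !flatten_cat /= !f'E // eqxx.
rewrite -cat1s catA; apply: pe_trans (pres_eq_catr _ (adab_eq_comm _ _)) _.
rewrite -!catA; apply: pres_eq_catl; rewrite catA.
exact: pres_eq_catr (pres_eq_pow_cons _ _ _ _).
Qed.

Hypothesis m_diag : forall s, m s s = 1%N.
Hypothesis R_covers : forall u, inQ m u -> exists2 s, s \in R & W_conj m u [:: (s, false)].

Lemma adab_eq_letter_rep (x : QW m) b :
  exists2 r, r \in R & adab_eq m [:: (x, b)] [:: (gen_of m r, b)].
Proof.
have [r rR x_r] := R_covers (svalP x).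
by exists r => //; apply: adab_eq_conj.
Qed.

Lemma adab_eq_comb (u : word (QW m)) : exists f, adab_eq m u (comb m R f).
Proof.
elim: u => [|[x b] u [f Hf]]; first by exists (fun=> 0); rewrite comb0; apply: pe_refl.
have [r rR Hx] := adab_eq_letter_rep x b.
exists (fun s => if s == r then sign_of b + f r else f s).
exact: pe_trans (pres_eq_cat Hx Hf) (adab_eq_comb_cons _ _ rR).
Qed.

End Spanning.

Section Independence.
Variables (S : finType) (m : S -> S -> nat) (R : {set S}).
Hypothesis m_diag : forall s, m s s = 1%N.
Hypothesis R_reps : complete_reps m R.

Lemma rep_exists (x : QW m) : exists s, s \in R /\ W_conj m (sval x) [:: (s, false)].
Proof. by have [s sR Hs] := R_reps.1 _ (svalP x); exists s. Qed.

Definition rep_of (x : QW m) : S :=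
  sval (constructive_indefinite_description _ (rep_exists x)).

Lemma rep_ofP (x : QW m) : rep_of x \in R /\ W_conj m (sval x) [:: (rep_of x, false)].
Proof. exact: svalP (constructive_indefinite_description _ (rep_exists x)). Qed.

Lemma rep_of_conj (x y : QW m) : W_conj m (sval x) (sval y) -> rep_of x = rep_of y.
Proof.
move=> xy; have [xR x_rx] := rep_ofP x; have [yR y_ry] := rep_ofP y.
apply: R_reps.2 => //; apply: W_conj_trans (W_conj_sym x_rx) _.
exact: W_conj_trans xy y_ry.
Qed.

Lemma rep_of_gen s : s \in R -> rep_of (gen_of m s) = s.
Proof. by move=> sR; have [? ?] := rep_ofP (gen_of m s); apply/esym/R_reps.2. Qed.

Lemma exponent_sum_adab_rel r t : adab_rel m r -> exponent_sum rep_of r t = 0.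
Proof.
case=> [[[x [x' [xx' ->]]]|[x [y [z [zyxy ->]]]]]|[a [b ->]]].
- rewrite !exponent_sum_cons exponent_sum_nil /=.
  rewrite (rep_of_conj (W_eq_conj xx')); case: (_ == t); rewrite /sign_of; lia.
- have xz : W_conj m (sval x) (sval z).
    exists (sval y); apply: pe_trans zyxy (pres_eq_catr _ _).
    exact: (inQ_W_eq_inv m_diag (svalP y)).
  rewrite !exponent_sum_cons exponent_sum_nil /= (rep_of_conj xz).
  by case: (_ == t); case: (_ == t); rewrite /sign_of; lia.
- by rewrite !exponent_sum_cat !exponent_sum_inv; lia.
Qed.

Lemma exponent_sum_comb f t : t \in R -> exponent_sum rep_of (comb m R f) t = f t.
Proof.
move=> tR; rewrite exponent_sum_flatten big_map.
rewrite (eq_big_seq (fun s => if s == t then f s else 0)) => [|s]; last first.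
  by rewrite mem_enum exponent_sum_pow => /rep_of_gen ->.
rewrite (bigD1_seq t) ?mem_enum ?enum_uniq //= eqxx big1 ?addr0 //.
by move=> s /negbTE ->.
Qed.

Lemma comb_adab_eq0 f : adab_eq m (comb m R f) [::] -> forall t, t \in R -> f t = 0.
Proof.
move=> Hf t tR; rewrite -(exponent_sum_comb f tR) -(exponent_sum_nil rep_of t).
by apply: exponent_sum_pres_eq Hf => r; apply: exponent_sum_adab_rel.
Qed.

End Independence.

Theorem proposition2p4 (S : finType) (m : S -> S -> nat)
  (Hm : coxeter_matrix m) (R : {set S}) (HR : complete_reps m R) :
  (* the [e_s], s in R, generate Ad(Q_W)_Ab ... *)
  (forall u : word (QW m), exists f : S -> int, adab_eq m u (comb m R f)) /\
  (* ... and are Z-linearly independent: a basis, so Ad(Q_W)_Ab = Z^#|R| *)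
  (forall f : S -> int, adab_eq m (comb m R f) [::] ->
     forall s, s \in R -> f s = 0%R).
Proof.
have m_diag : forall s, m s s = 1%N by case: Hm.
split; first exact: adab_eq_comb m_diag HR.1.
exact: comb_adab_eq0 m_diag HR.
Qed.
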